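(* Let $\mathbb Z\langle X\rangle$ be the free unital associative ring on $X=\{x_1,x_2,\dots\}$ and let $I$ be the left ideal of $\mathbb Z\langle X\rangle$ generated by a set $S\subset\Gamma$; let $\Gamma\cdot S$ be the left ideal of $\Gamma$ generated by $S$. Then the additive group $\mathbb Z\langle X\rangle/I$ is isomorphic to \[\Gamma/(\Gamma\cdot S)\;\oplus\bigoplus_{s\ge1;\ i_1\le\dots\le i_s}(x_{i_1}\cdots x_{i_s}\Gamma)/(x_{i_1}\cdots x_{i_s}\Gamma\cdot S),\] and for all $s\ge1$, $i_1\le\dots\le i_s$, the group $(x_{i_1}\cdots x_{i_s}\Gamma)/(x_{i_1}\cdots x_{i_s}\Gamma\cdot S)$ is isomorphic to $\Gamma/(\Gamma\cdot S)$ via the isomorphism induced by $f\mapsto x_{i_1}\cdots x_{i_s}f$ ($f\in\Gamma$).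
   Context: $\Gamma$ is the unital subring of $\mathbb Z\langle X\rangle$ generated by all left-normed commutators $[x_{i_1},\dots,x_{i_l}]$ with $l\ge2$ (where $[a,b]=ab-ba$, $[a_1,\dots,a_n]=[[a_1,\dots,a_{n-1}],a_n]$). *)

From HB Require Import structures.
From mathcomp Require Import all_boot all_order all_algebra.
From mathcomp Require Import finmap.
From mathcomp.multinomials Require Import monalg.

Set Implicit Arguments.
Unset Strict Implicit.
Unset Printing Implicit Defensive.

Import GRing.Theory.
Local Open Scope ring_scope.

(* The free unital associative ring Z<X> on X = {x_0, x_1, ...}:
   the monoid ring over int of the free monoid on nat. *)
Definition ZX := {malg int[{fmonom nat}]}.

Definition xv (i : nat) : ZX := << fmu i >>.

Definition xprod (s : seq nat) : ZX := \prod_(i <- s) xv i.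

Definition comm (a b : ZX) : ZX := a * b - b * a.

Definition lncomm (s : seq nat) : ZX :=
  match s with
  | [::] => 0
  | i :: t => foldl (fun c j => comm c (xv j)) (xv i) t
  end.

Inductive Gamma : ZX -> Prop :=
  | Gamma_gen (s : seq nat) : (2 <= size s)%N -> Gamma (lncomm s)
  | Gamma_one : Gamma 1
  | Gamma_sub a b : Gamma a -> Gamma b -> Gamma (a - b)
  | Gamma_mul a b : Gamma a -> Gamma b -> Gamma (a * b).

(* With A = (fun _ => True)
   this is the left ideal I of Z<X> generated by S; with A = Gamma it is
   the left ideal Gamma . S of Gamma generated by S. *)
Inductive lideal_gen (A S : ZX -> Prop) : ZX -> Prop :=
  | lideal_gen_S s : S s -> lideal_gen A S s
  | lideal_gen_0 : lideal_gen A S 0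
  | lideal_gen_sub a b : lideal_gen A S a -> lideal_gen A S b ->
                         lideal_gen A S (a - b)
  | lideal_gen_mul g a : A g -> lideal_gen A S a -> lideal_gen A S (g * a).

Definition lmulset (w : ZX) (P : ZX -> Prop) : ZX -> Prop :=
  fun y => exists2 f, P f & y = w * f.

(* f : V -> W induces an isomorphism of abelian groups A/B ~= C/D
   (A, B subgroups of V with B <= A, and C, D subgroups of W with D <= C):
   f maps A into C, is additive modulo D on A (so it defines a group
   homomorphism A -> C/D), this homomorphism is onto C/D, and its kernel
   is exactly B. *)
Definition induces_quot_iso (V W : zmodType) (A B : V -> Prop)
    (C D : W -> Prop) (f : V -> W) : Prop :=
  [/\ (forall x, A x -> C (f x)),
      (forall x y, A x -> A y -> D (f (x + y) - (f x + f y))),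
      (forall y, C y -> exists2 x, A x & D (y - f x)) &
      (forall x, A x -> (D (f x) <-> B x))].

Definition quot_iso (V W : zmodType) (A B : V -> Prop) (C D : W -> Prop) :=
  exists f : V -> W, induces_quot_iso A B C D f.

(* The external direct sum of the groups indexed by nondecreasing sequences
   w = (i_1 <= ... <= i_s), s >= 0, realized as finitely supported families
   F : {malg ZX[seq nat]} (F@_w is the w-component), with F@_w = 0 for
   non-sorted w. *)
Definition DS := {malg ZX[seq nat]}.

Definition dsum (C : seq nat -> ZX -> Prop) : DS -> Prop :=
  fun F => forall w : seq nat,
    (sorted leq w -> C w (F@_w)) /\ (~~ sorted leq w -> F@_w = 0).

(* Let d_i be the derivation of Z<X> with d_i(x_j) = delta_ij.  It kills every
   commutator [c, x_j] with c constant, hence all of Gamma.  Applying d_i to a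
   relation sum_w x_w g_w = 0, with distinct sorted words w and constant
   coefficients g_w, strips one letter i from each word containing it; by
   induction on the total length all g_w vanish, so the sorted monomials are
   free over Gamma.  Rewriting x_a x_b = x_b x_a + [x_a, x_b] shows that they
   also span Z<X> as a right Gamma-module, so Z<X> is the direct sum of the
   x_w Gamma, and the same rewriting places I inside the sum of the
   x_w (Gamma . S): this gives the first isomorphism.  The second is left
   cancellation of monomials in the free monoid ring. *)

From HB Require Import structures.
From mathcomp Require Import all_boot all_order all_algebra.
From mathcomp Require Import finmap.
From mathcomp.multinomials Require Import monalg.
From Stdlib Require Import ClassicalEpsilon.

Set Implicit Arguments.
Unset Strict Implicit.
Unset Printing Implicit Defensive.

Import GRing.Theory.
Local Open Scope ring_scope.

Definition zmod_closedP (V : zmodType) (T : V -> Prop) : Prop :=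
  T 0 /\ forall a b, T a -> T b -> T (a - b).

Section ZmodClosedP.
Variables (V : zmodType) (T : V -> Prop).
Hypothesis Tzmod : zmod_closedP T.

Lemma zmod_closedPN a : T a -> T (- a).
Proof. by rewrite -sub0r; apply: Tzmod.2; exact: Tzmod.1. Qed.

Lemma zmod_closedPD a b : T a -> T b -> T (a + b).
Proof. by move=> Ta /zmod_closedPN Tb; rewrite -[b]opprK; apply: Tzmod.2. Qed.
End ZmodClosedP.

Lemma commrBl (R : pzRingType) (a b x : R) :
  (a - b) * x - x * (a - b) = (a * x - x * a) - (b * x - x * b).
Proof. by rewrite mulrBl mulrBr !opprB addrACA [RHS]addrACA [- (b * x) + _]addrC. Qed.

Lemma commrMl (R : pzRingType) (a b x : R) :
  (a * b) * x - x * (a * b) = a * (b * x - x * b) + (a * x - x * a) * b.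
Proof. by rewrite mulrBr mulrBl !mulrA addrA addrNK. Qed.

Lemma mulr_swapl (R : pzRingType) (c x y : R) :
  c * (x * y) = x * (c * y) + (c * x - x * c) * y.
Proof. by rewrite mulrBl !mulrA addrC addrNK. Qed.

Lemma sorted_cons_rem i r : sorted leq (i :: r) -> i \in r -> i :: rem i r = r.
Proof.
case: r => [|b r] //= /andP[ib sr]; rewrite in_cons => /predU1P[<-|ir].
  by rewrite eqxx.
have bi : (b <= i)%N by move: sr; rewrite (path_sortedE leq_trans) => /andP[/allP->].
by rewrite (@anti_leq b i) ?ib ?bi // eqxx.
Qed.

Lemma sort_cons_rem i w : sorted leq w -> i \in w -> sort leq (i :: rem i w) = w.
Proof.
move=> sw iw; rewrite -[RHS](sorted_sort leq_trans sw).
by apply/perm_sortP; [exact: leq_total | exact: leq_trans | exact: anti_leq |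
  rewrite perm_sym perm_to_rem].
Qed.

Lemma rem_inj_sorted i v w : sorted leq v -> sorted leq w -> i \in v -> i \in w ->
  rem i v = rem i w -> v = w.
Proof.
by move=> sv sw iv iw e; rewrite -(sort_cons_rem sv iv) -(sort_cons_rem sw iw) e.
Qed.

Lemma sum_size_rem_lt (I : eqType) i (K : seq I) (u : I -> seq nat) k :
  k \in K -> i \in u k ->
  (\sum_(j <- K | i \in u j) size (rem i (u j)) < \sum_(j <- K) size (u j))%N.
Proof.
move=> kK iuk; rewrite [X in (_ < X)%N](bigID (fun j => i \in u j)) /=.
have -> : \sum_(j <- K | i \in u j) size (u j) =
          (\sum_(j <- K | i \in u j) size (rem i (u j)) + count (fun j => i \in u j) K)%N.
  rewrite -sum1_count -big_split /=; apply: eq_bigr => j iuj.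
  by rewrite size_rem // addn1 prednK // lt0n size_eq0; case: (u j) iuj.
have cnt : (0 < count (fun j => i \in u j) K)%N by rewrite -has_count; apply/hasP; exists k.
by rewrite -addnA -[X in (X < _)%N]addn0 ltn_add2l; exact: ltn_addr.
Qed.

Section WordDerivation.
Variables (R : pzRingType) (x d : nat -> R).

Fixpoint word_deriv (s : seq nat) : R :=
  if s is a :: r then d a * \prod_(b <- r) x b + x a * word_deriv r else 0.

Lemma word_deriv_cat r s :
  word_deriv (r ++ s) =
  word_deriv r * \prod_(b <- s) x b + \prod_(b <- r) x b * word_deriv s.
Proof.
elim: r => [|a r IH] /=; first by rewrite big_nil mul0r add0r mul1r.
by rewrite IH big_cat big_cons mulrDr mulrDl !mulrA addrA.
Qed.

End WordDerivation.

Lemma word_deriv_sorted (R : pzRingType) (x : nat -> R) i w : sorted leq w ->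
  word_deriv x (fun a => (a == i)%:R) w = \prod_(b <- rem i w) x b *+ count_mem i w.
Proof.
elim: w => [|a r IH] sw /=; first by rewrite mulr0n.
rewrite IH ?(path_sorted sw) //; case: eqVneq => [<-|ai] /=.
  rewrite mul1r add1n mulrnAr; case: (boolP (a \in r)) => ar.
    have -> : x a * \prod_(b <- rem a r) x b = \prod_(b <- r) x b.
      by rewrite -[in RHS](sorted_cons_rem sw ar) big_cons.
    by rewrite mulrS.
  by rewrite (count_memPn ar) !mulr0n addr0.
by rewrite mul0r add0r big_cons -mulrnAr.
Qed.

Section Derivation.
Variables (R : pzRingType) (D : R -> R).
Hypothesis DB : {morph D : p q / p - q}.

Lemma derivation_of_generators (I : Type) (e : I -> R) :
  (forall P : R -> Prop, P 0 -> (forall p q, P p -> P q -> P (p - q)) ->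
     (forall s, P (e s)) -> forall p, P p) ->
  (forall r s, D (e r * e s) = D (e r) * e s + e r * D (e s)) ->
  forall p q, D (p * q) = D p * q + p * D q.
Proof.
move=> R_ind De p q; have D0 : D 0 = 0 by rewrite -{1}(subrr (0 : R)) DB subrr.
elim/R_ind: p q => [|p1 p2 IH1 IH2|r] q.
- by rewrite !mul0r D0 mul0r addr0.
- by rewrite mulrBl !DB IH1 IH2 !mulrBl opprD addrACA.
elim/R_ind: q => [|q1 q2 IH1 IH2|s]; last exact: De.
- by rewrite !mulr0 D0 mulr0 addr0.
by rewrite mulrBr !DB IH1 IH2 !mulrBr opprD addrACA.
Qed.

Hypothesis DM : forall p q, D (p * q) = D p * q + p * D q.

Lemma derivation_comm_nat c x n :
  D x = n%:R -> D (c * x - x * c) = D c * x - x * D c.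
Proof.
move=> Dx; rewrite DB !DM Dx commr_nat.
by rewrite [n%:R * c + _]addrC opprD addrACA subrr addr0.
Qed.

End Derivation.

Lemma quot_iso_of_bij (V W : zmodType) (B : V -> Prop) (C D : W -> Prop) (g : W -> V) :
  {morph g : y z / y + z} -> zmod_closedP C -> D 0 ->
  (forall x, exists y, C y /\ g y = x) ->
  (forall y z, C y -> C z -> g y = g z -> y = z) ->
  (forall y, C y -> B (g y) <-> D y) ->
  quot_iso (fun _ => True) B C D.
Proof.
move=> gD Czmod D0 gsurj ginj gker.
have [f fP] := ClassicalEpsilon.choice _ gsurj.
have fK y : C y -> f (g y) = y by move=> Cy; apply: ginj (fP _).1 Cy (fP _).2.
exists f; split=> [x _|x y _ _|y Cy|x _]; first exact: (fP x).1.
- have -> : f (x + y) = f x + f y.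
    apply: ginj (fP _).1 (zmod_closedPD Czmod (fP x).1 (fP y).1) _.
    by rewrite gD !(fP _).2.
  by rewrite subrr.
- by exists (g y) => //; rewrite fK // subrr.
by rewrite -gker ?(fP x).2 //; exact: (fP x).1.
Qed.

Lemma xprod_nil : xprod [::] = 1.
Proof. by rewrite /xprod big_nil. Qed.

Lemma xprod_cons a r : xprod (a :: r) = xv a * xprod r.
Proof. by rewrite /xprod big_cons. Qed.

Lemma xprod_cat r s : xprod (r ++ s) = xprod r * xprod s.
Proof. by rewrite /xprod big_cat. Qed.

Lemma xprodE s : xprod s = << FMonom s >> :> ZX.
Proof.
elim: s => [|a s IH]; first by rewrite xprod_nil -fmoneE.
rewrite xprod_cons IH /xv malgM_def fgmulUU mulr1.
by congr << _ *g _ >>; apply/val_inj; rewrite /= fmM fmU.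
Qed.

Lemma mcoeff_xprodM w p m : (xprod w * p)@_(FMonom (w ++ m)) = p@_(FMonom m).
Proof.
have cancel_w (k : {fmonom nat}) : (mmul (FMonom w) k == FMonom (w ++ m)) = (k == FMonom m).
  by rewrite -(inj_eq val_inj) /= fmM -[RHS](inj_eq val_inj) /= eqseq_cat // eqxx.
rewrite xprodE mcoeffMl msuppU1 big_seq_fset1 mcoeffUU.
under eq_bigr => k _ do rewrite mul1r cancel_w.
case: (msuppP p (FMonom m)) => [mp|nmp].
  by rewrite (bigD1_seq _ mp (fset_uniq _)) /= eqxx big1 ?addr0 // => k /negbTE ->.
by rewrite big1_seq // => k /andP[_ kp]; case: eqP kp nmp => // -> ->.
Qed.

Lemma xprod_lreg w : GRing.lreg (xprod w).
Proof.
move=> p q e; apply/malgP => m.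
by rewrite -(fmK m) -(mcoeff_xprodM w p) -(mcoeff_xprodM w q) e.
Qed.

Lemma ZX_word_ind (P : ZX -> Prop) :
  P 0 -> (forall p q, P p -> P q -> P (p - q)) -> (forall s, P (xprod s)) ->
  forall p, P p.
Proof.
move=> P0 PB Pw.
have PN p : P p -> P (- p) by rewrite -sub0r; apply: PB.
have PD p q : P p -> P q -> P (p + q) by move=> Pp /PN Pq; rewrite -[q]opprK; apply: PB.
have PMn p n : P p -> P (p *+ n).
  by move=> Pp; elim: n => [|n IH]; rewrite ?mulr0n // mulrS; apply: PD.
move=> p; rewrite (monalgE p); apply: big_ind => // m _.
have -> : << p@_m *g m >> = xprod m *~ p@_m.
  by rewrite xprodE fmK -(raddfMz (mkmalgU m)) /= intz.
case: (p@_m) => n; first exact: PMn.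
by rewrite NegzE mulrNz; apply/PN/PMn.
Qed.

Lemma ZX_mulrn_eq0 (p : ZX) n : (p *+ n == 0) = (n == 0%N) || (p == 0).
Proof.
case: n => [|n]; first by rewrite mulr0n !eqxx.
apply/eqP/eqP => [pn0|->]; last by rewrite mul0rn.
apply/malgP => m; move/(congr1 (mcoeff m))/eqP: pn0.
by rewrite mcoeffMn mcoeff0 Num.Theory.mulrn_eq0 => /eqP.
Qed.

Definition derx (i : nat) (p : ZX) : ZX :=
  mmap intr (fun m : {fmonom nat} => word_deriv xv (fun a => (a == i)%:R) m) p.

Lemma derxB i : {morph derx i : p q / p - q}.
Proof. exact: raddfB. Qed.

Lemma derx0 i : derx i 0 = 0.
Proof. exact: raddf0. Qed.

Lemma derxMn i p n : derx i (p *+ n) = derx i p *+ n.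
Proof. exact: raddfMn. Qed.

Lemma derx_sum (I : Type) i (K : seq I) (F : I -> ZX) :
  derx i (\sum_(k <- K) F k) = \sum_(k <- K) derx i (F k).
Proof. exact: raddf_sum. Qed.

Lemma derx_xprod i s : derx i (xprod s) = word_deriv xv (fun a => (a == i)%:R) s.
Proof. by rewrite xprodE /derx mmapU /= mulr1z mul1r. Qed.

Lemma derxM i p q : derx i (p * q) = derx i p * q + p * derx i q.
Proof.
apply: (derivation_of_generators (derxB i) ZX_word_ind) => r s.
by rewrite -xprod_cat !derx_xprod word_deriv_cat.
Qed.

Lemma derx_xv i j : derx i (xv j) = (j == i)%:R.
Proof.
have -> : xv j = xprod [:: j] by rewrite xprod_cons xprod_nil mulr1.
by rewrite derx_xprod /= big_nil mulr1 mulr0 addr0.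
Qed.

Definition derx_const (p : ZX) : Prop := forall i, derx i p = 0.

Lemma derx_comm_xv i c j : derx i (comm c (xv j)) = comm (derx i c) (xv j).
Proof. exact: (derivation_comm_nat (derxB i) (derxM i) c (derx_xv i j)). Qed.

Lemma lncomm_derx_const s : (2 <= size s)%N -> derx_const (lncomm s).
Proof.
case: s => [|a [|b t]] // _ i /=.
have : derx i (comm (xv a) (xv b)) = 0.
  by rewrite derx_comm_xv derx_xv /comm commr_nat subrr.
elim: t (comm (xv a) (xv b)) => [|j t IH] c dc0 /=; first exact: dc0.
by apply: IH; rewrite derx_comm_xv dc0 /comm mul0r mulr0 subrr.
Qed.

Lemma Gamma_derx_const p : Gamma p -> derx_const p.
Proof.
elim=> [s /lncomm_derx_const //||a b _ Ha _ Hb|a b _ Ha _ Hb] i.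
- by rewrite -xprod_nil derx_xprod.
- by rewrite derxB Ha Hb subrr.
by rewrite derxM Ha Hb mul0r mulr0 addr0.
Qed.

(** * Sorted monomials are free over the constants *)

Lemma derx_xprodM_sorted i w g : sorted leq w -> derx_const g ->
  derx i (xprod w * g) = xprod (rem i w) * (g *+ count_mem i w).
Proof.
move=> sw cg; rewrite derxM cg mulr0 addr0 derx_xprod (word_deriv_sorted _ _ sw).
by rewrite mulrnAl -mulrnAr.
Qed.

Lemma derx_sum_sorted (I : eqType) i (K : seq I) (u : I -> seq nat) (g : I -> ZX) :
  (forall k, k \in K -> sorted leq (u k)) -> (forall k, k \in K -> derx_const (g k)) ->
  derx i (\sum_(k <- K) xprod (u k) * g k) =
  \sum_(k <- K | i \in u k) xprod (rem i (u k)) * (g k *+ count_mem i (u k)).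
Proof.
move=> su cg; rewrite derx_sum (bigID (fun k => i \in u k)) /=.
rewrite [X in _ + X]big1_seq => [|k /andP[/count_memPn c0 kK]]; last first.
  by rewrite (derx_xprodM_sorted _ (su k kK) (cg k kK)) c0 mulr0n mulr0.
rewrite addr0 [LHS]big_seq_cond [RHS]big_seq_cond; apply: eq_bigr => k /andP[kK _].
exact: derx_xprodM_sorted (su k kK) (cg k kK).
Qed.

Lemma sorted_xprod_free (I : eqType) (K : seq I) (u : I -> seq nat) (g : I -> ZX) :
  uniq K -> {in K &, injective u} -> (forall k, k \in K -> sorted leq (u k)) ->
  (forall k, k \in K -> derx_const (g k)) ->
  \sum_(k <- K) xprod (u k) * g k = 0 -> forall k, k \in K -> g k = 0.
Proof.
have [n] := ubnP (\sum_(k <- K) size (u k)); elim: n => // n IHn in K u g *.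
move=> ltK uK inj su cg sum0.
(* Differentiating in a letter [i] of [u k] removes one [i] from every word
   containing it, which lowers the total length. *)
have g0 k : k \in K -> u k != [::] -> g k = 0.
  case E : (u k) => [|i t] // kK _.
  have iuk : i \in u k by rewrite E mem_head.
  pose Ki := [seq j <- K | i \in u j].
  have Ki_sub j : j \in Ki -> i \in u j /\ j \in K by rewrite mem_filter => /andP.
  suff : g k *+ count_mem i (u k) = 0.
    by move/eqP; rewrite ZX_mulrn_eq0 eqn0Ngt -has_count has_pred1 iuk => /eqP.
  apply: (IHn Ki (fun j => rem i (u j)) (fun j => g j *+ count_mem i (u j))).
  - by rewrite big_filter; apply: leq_trans (sum_size_rem_lt kK iuk) _.
  - exact: filter_uniq.
  - move=> j1 j2 /Ki_sub[i1 j1K] /Ki_sub[i2 j2K] e.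
    exact/inj/(rem_inj_sorted (su _ j1K) (su _ j2K) i1 i2 e).
  - by move=> j /Ki_sub[_ /su sj]; exact: (subseq_sorted leq_trans (rem_subseq _ _) sj).
  - by move=> j /Ki_sub[_ /cg c] l; rewrite derxMn c mul0rn.
  - by rewrite big_filter -(derx_sum_sorted i su cg) sum0 derx0.
  by rewrite mem_filter iuk.
move=> k kK; case: (eqVneq (u k) [::]) => [uk0|]; last exact: g0.
have others0 : \sum_(j <- K | j != k) xprod (u j) * g j = 0.
  rewrite big1_seq // => j /andP[jk jK]; rewrite g0 ?mulr0 //.
  by apply: contra jk => /eqP uj0; apply/eqP/inj; rewrite ?uj0.
by move: sum0; rewrite (bigD1_seq k kK uK) /= others0 addr0 uk0 xprod_nil mul1r.
Qed.

Lemma Gamma_zmod : zmod_closedP Gamma.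
Proof.
split=> [|a b]; last exact: Gamma_sub.
by rewrite -(subrr 1); apply: Gamma_sub; exact: Gamma_one.
Qed.

Lemma lideal_gen_zmod A S : zmod_closedP (lideal_gen A S).
Proof. by split=> [|a b]; [exact: lideal_gen_0 | exact: lideal_gen_sub]. Qed.

Lemma Gamma_comm_xv c j : Gamma c -> Gamma (comm c (xv j)).
Proof.
elim=> [s s2|| a b _ Ha _ Hb | a b Ga Ha Gb Hb].
- case: s s2 => [|a t] // s2.
  have -> : comm (lncomm (a :: t)) (xv j) = lncomm (rcons (a :: t) j).
    by rewrite /= foldl_rcons.
  by apply: Gamma_gen; rewrite size_rcons; exact: leqW.
- by rewrite /comm mul1r mulr1 subrr; exact: Gamma_zmod.1.
- have -> : comm (a - b) (xv j) = comm a (xv j) - comm b (xv j) := commrBl a b (xv j).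
  exact: Gamma_sub.
have -> : comm (a * b) (xv j) = a * comm b (xv j) + comm a (xv j) * b := commrMl a b (xv j).
by apply: (zmod_closedPD Gamma_zmod); apply: Gamma_mul.
Qed.

Lemma lideal_gen_mono (A A' S : ZX -> Prop) p :
  (forall g, A g -> A' g) -> lideal_gen A S p -> lideal_gen A' S p.
Proof.
move=> AA'; elim=> [s Ss||a b _ Ha _ Hb|g a Ag _ Ha].
- exact: lideal_gen_S.
- exact: lideal_gen_0.
- exact: lideal_gen_sub.
by apply: lideal_gen_mul; [exact: AA' | exact: Ha].
Qed.

Lemma lideal_gen_Gamma S p :
  (forall s, S s -> Gamma s) -> lideal_gen Gamma S p -> Gamma p.
Proof.
move=> SG; elim=> [s /SG //||a b _ Ha _ Hb|g a Gg _ Ha].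
- exact: Gamma_zmod.1.
- exact: Gamma_sub.
exact: Gamma_mul.
Qed.

(** * Sorted monomials span over [Gamma] *)

Inductive word_span (P : seq nat -> Prop) (T : ZX -> Prop) : ZX -> Prop :=
  | word_span0 : word_span P T 0
  | word_span_term w g : P w -> T g -> word_span P T (xprod w * g)
  | word_spanD p q : word_span P T p -> word_span P T q -> word_span P T (p + q).

Lemma word_span_morph P T P' T' (F : ZX -> ZX) p :
  F 0 = 0 -> {morph F : p q / p + q} ->
  (forall w g, P w -> T g -> word_span P' T' (F (xprod w * g))) ->
  word_span P T p -> word_span P' T' (F p).
Proof.
move=> F0 FD Fterm; elim=> [|w g Pw Tg|p1 p2 _ IH1 _ IH2].
- by rewrite F0; exact: word_span0.
- exact: Fterm.
by rewrite FD; exact: word_spanD.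
Qed.

Lemma word_span_mono P T P' T' p :
  (forall w, P w -> P' w) -> (forall g, T g -> T' g) ->
  word_span P T p -> word_span P' T' p.
Proof.
move=> PP' TT'; elim=> [|w g Pw Tg|p1 p2 _ IH1 _ IH2].
- exact: word_span0.
- by apply: word_span_term; [exact: PP' | exact: TT'].
exact: word_spanD.
Qed.

Lemma word_span_mull P T P' T' a p :
  (forall w g, P w -> T g -> word_span P' T' (a * (xprod w * g))) ->
  word_span P T p -> word_span P' T' (a * p).
Proof. exact: (word_span_morph (F := fun x => a * x) (mulr0 a) (mulrDr a)). Qed.

Lemma word_span_mulr P T P' T' h p :
  (forall w g, P w -> T g -> word_span P' T' (xprod w * g * h)) ->
  word_span P T p -> word_span P' T' (p * h).
Proof. exact: (word_span_morph (F := fun x => x * h) (mul0r h) (fun x y => mulrDl x y h)). Qed.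

Lemma word_spanN P T p : zmod_closedP T -> word_span P T p -> word_span P T (- p).
Proof.
move=> Tzmod; apply: (word_span_morph (F := fun x => - x) (oppr0 _) (@opprD _)) => w g Pw Tg.
by rewrite -mulrN; apply: word_span_term => //; exact: zmod_closedPN.
Qed.

Lemma Gamma_mul_xprod q c :
  Gamma c -> word_span (fun v => subseq v q) Gamma (c * xprod q).
Proof.
elim: q c => [|j q IH] c Gc.
  have -> : c * xprod [::] = xprod [::] * c by rewrite xprod_nil mulr1 mul1r.
  exact: word_span_term.
have -> : c * xprod (j :: q) = xv j * (c * xprod q) + comm c (xv j) * xprod q.
  by rewrite xprod_cons; exact: mulr_swapl.
apply: word_spanD.
  apply: word_span_mull (IH c Gc) => w g swq Gg.
  by rewrite mulrA -xprod_cons; apply: word_span_term => //=; rewrite eqxx.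
apply: word_span_mono (IH _ (Gamma_comm_xv j Gc)) => // w swq.
exact: subseq_trans swq (subseq_cons q j).
Qed.

Lemma xv_mul_word_span a lo w g : Gamma g -> path leq lo w -> (lo <= a)%N ->
  word_span (path leq lo) Gamma (xv a * (xprod w * g)).
Proof.
(* For [b < a], [x_a x_b = x_b x_a + [x_a, x_b]] moves the smaller letter first. *)
elim: w a lo => [|b w IH] a lo Gg plw loa.
  by rewrite mulrA -xprod_cons; apply: word_span_term => //=; rewrite loa.
move: plw => /= /andP[lob pbw]; case: (leqP a b) => [ab|ba].
  by rewrite mulrA -xprod_cons; apply: word_span_term => //=; rewrite loa ab.
rewrite xprod_cons -mulrA.
have -> : xv a * (xv b * (xprod w * g)) =
    xv b * (xv a * (xprod w * g)) + comm (xv a) (xv b) * (xprod w * g).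
  exact: mulr_swapl.
apply: word_spanD.
  apply: word_span_mull (IH a b Gg pbw (ltnW ba)) => v h pbv Gh.
  by rewrite mulrA -xprod_cons; apply: word_span_term => //=; rewrite lob pbv.
rewrite mulrA; apply: word_span_mulr (Gamma_mul_xprod w (@Gamma_gen [:: a; b] _)) => // v h svw Gh.
rewrite -mulrA; apply: word_span_term; last exact: Gamma_mul.
exact: (path_le leq_trans lob (subseq_path leq_trans svw pbw)).
Qed.

Lemma word_span_sorted p : word_span (sorted leq) Gamma p.
Proof.
elim/ZX_word_ind: p => [|p q Hp Hq|s].
- exact: word_span0.
- exact: word_spanD Hp (word_spanN Gamma_zmod Hq).
elim: s => [|a s IH].
  have -> : xprod [::] = xprod [::] * 1 by rewrite mulr1.
  exact: word_span_term Gamma_one.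
rewrite xprod_cons; apply: word_span_mull IH => w g sw Gg.
apply: word_span_mono (xv_mul_word_span Gg _ (leq0n a)) => [v|//|].
  exact: path_sorted.
by case: w sw.
Qed.

Lemma lideal_word_span S p :
  lideal_gen (fun _ => True) S p -> word_span (sorted leq) (lideal_gen Gamma S) p.
Proof.
elim=> [s Ss||a b _ Ha _ Hb|g a _ _ Ha].
- have -> : s = xprod [::] * s by rewrite xprod_nil mul1r.
  exact: word_span_term (lideal_gen_S _ Ss).
- exact: word_span0.
- exact: word_spanD Ha (word_spanN (lideal_gen_zmod _ _) Hb).
apply: word_span_mull Ha => w h sw Sh; rewrite mulrA.
apply: word_span_mulr (word_span_sorted (g * xprod w)) => v c sv Gc.
by rewrite -mulrA; apply: word_span_term => //; exact: lideal_gen_mul.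
Qed.

(** * The direct sum decomposition *)

Definition ds_sum (F : DS) : ZX := mmap (@idfun ZX) (fun _ => 1) F.

Lemma ds_sumD : {morph ds_sum : F G / F + G}.
Proof. exact: raddfD. Qed.

Lemma ds_sumB : {morph ds_sum : F G / F - G}.
Proof. exact: raddfB. Qed.

Lemma ds_sumU c w : ds_sum << c *g w >> = c.
Proof. by rewrite /ds_sum mmapU mulr1. Qed.

Lemma ds_sumE F : ds_sum F = \sum_(w <- msupp F) F@_w.
Proof. by rewrite /ds_sum mmapE; apply: eq_bigr => w _; rewrite mulr1. Qed.

Definition xdsum (T : ZX -> Prop) : DS -> Prop := dsum (fun w => lmulset (xprod w) T).

Lemma xdsum_coef T F w : T 0 -> xdsum T F -> exists2 h, T h & F@_w = xprod w * h.
Proof.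
move=> T0 /(_ w)[Fs Fns]; case: (boolP (sorted leq w)) => [/Fs//|/Fns ->].
by exists 0; rewrite ?mulr0.
Qed.

Lemma xdsum_zmod T : zmod_closedP T -> zmod_closedP (xdsum T).
Proof.
move=> [T0 TB]; split=> [w|F G HF HG w]; rewrite ?mcoeff0 ?mcoeffB.
  by split=> // _; exists 0; rewrite ?mulr0.
have [[F1 F2] [G1 G2]] := (HF w, HG w); split=> [sw|nsw]; last by rewrite F2 // G2 // subrr.
have [[a Ta ->] [b Tb ->]] := (F1 sw, G1 sw).
by exists (a - b); [exact: TB | rewrite mulrBr].
Qed.

Lemma xdsum_mono (T T' : ZX -> Prop) F :
  (forall g, T g -> T' g) -> xdsum T F -> xdsum T' F.
Proof.
move=> TT' HF w; have [F1 F2] := HF w; split=> // sw.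
by have [h Th ->] := F1 sw; exists h => //; exact: TT'.
Qed.

Lemma word_span_xdsum T p : zmod_closedP T ->
  word_span (sorted leq) T p -> exists F, xdsum T F /\ ds_sum F = p.
Proof.
move=> Tzmod; elim=> [|w g sw Tg|p1 p2 _ [F [HF <-]] _ [G [HG <-]]].
- by exists 0; split; [exact: (xdsum_zmod Tzmod).1 | exact: raddf0].
- exists << xprod w * g *g w >>; split; last exact: ds_sumU.
  move=> v; rewrite mcoeffU; case: (eqVneq w v) => [<-|wv] /=.
    by rewrite mulr1n; split=> [_|/negP//]; exists g.
  by rewrite mulr0n; split=> // _; exists 0; rewrite ?mulr0 //; exact: Tzmod.1.
exists (F + G); split; last exact: ds_sumD.
exact: zmod_closedPD (xdsum_zmod Tzmod) _ _ HF HG.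
Qed.

Lemma ds_sum_inj F G :
  xdsum Gamma F -> xdsum Gamma G -> ds_sum F = ds_sum G -> F = G.
Proof.
move=> HF HG eFG; apply/eqP; rewrite -subr_eq0; apply/eqP.
have HH := (xdsum_zmod Gamma_zmod).2 _ _ HF HG.
have sum0 : ds_sum (F - G) = 0 by rewrite ds_sumB eFG subrr.
move: (F - G) HH sum0 => H HH sum0.
have [h hP] : exists h : seq nat -> ZX, forall w, Gamma (h w) /\ H@_w = xprod w * h w.
  apply: (ClassicalEpsilon.choice (fun w h => Gamma h /\ H@_w = xprod w * h)) => w.
  by have [h Gh Hw] := xdsum_coef w Gamma_zmod.1 HH; exists h; exact: conj Gh Hw.
have supp_sorted w : w \in msupp H -> sorted leq w.
  by rewrite -mcoeff_neq0; apply: contraR => /(HH w).2 ->.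
have sum_h0 : \sum_(w <- msupp H) xprod (id w) * h w = 0.
  by rewrite -[RHS]sum0 ds_sumE; apply: eq_bigr => w _; rewrite (hP w).2.
have h0 := sorted_xprod_free (fset_uniq _) (in2W (@inj_id _)) supp_sorted
  (fun w _ => Gamma_derx_const (hP w).1) sum_h0.
apply/malgP => w; rewrite mcoeff0.
case: (boolP (w \in msupp H)) => [wH|/mcoeff_outdom //].
by rewrite (hP w).2 (h0 w wH) mulr0.
Qed.

Lemma lideal_ds_sum S F : (forall s, S s -> Gamma s) -> xdsum Gamma F ->
  lideal_gen (fun _ => True) S (ds_sum F) <-> xdsum (lideal_gen Gamma S) F.
Proof.
move=> SG HF; split=> [/lideal_word_span|HF'].
  case/(word_span_xdsum (lideal_gen_zmod _ _)) => F' [HF' eF'].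
  suff -> : F = F' by [].
  apply: ds_sum_inj HF _ (esym eF'); apply: xdsum_mono HF' => g; exact: lideal_gen_Gamma.
rewrite ds_sumE; apply: big_ind => [|a b|v _]; first exact: lideal_gen_0.
  exact: (zmod_closedPD (lideal_gen_zmod _ _)).
have [h Sh ->] := xdsum_coef v (lideal_gen_0 _ _) HF'.
by apply: lideal_gen_mul => //; apply: lideal_gen_mono Sh.
Qed.

Lemma lmulset_xprod_quot_iso w T U :
  U 0 ->
  induces_quot_iso T U (lmulset (xprod w) T) (lmulset (xprod w) U)
    (fun f => xprod w * f).
Proof.
move=> U0; split=> [x Tx|x y _ _|_ [f Tf ->]|x Tx].
- by exists x.
- by exists 0; rewrite // mulrDr subrr mulr0.
- by exists f => //; exists 0; rewrite // subrr mulr0.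
split=> [[h Uh /xprod_lreg ->] //|Ux]; by exists x.
Qed.

Theorem corollary2p5 (S : ZX -> Prop) (HS : forall s, S s -> Gamma s) :
  quot_iso (fun _ : ZX => True) (lideal_gen (fun _ => True) S)
    (dsum (fun w => lmulset (xprod w) Gamma))
    (dsum (fun w => lmulset (xprod w) (lideal_gen Gamma S)))
  /\
  (forall w : seq nat, (1 <= size w)%N -> sorted leq w ->
     induces_quot_iso Gamma (lideal_gen Gamma S)
       (lmulset (xprod w) Gamma) (lmulset (xprod w) (lideal_gen Gamma S))
       (fun f => xprod w * f)).
Proof.
split=> [|w _ _]; last exact: lmulset_xprod_quot_iso (lideal_gen_0 _ _).
apply: (quot_iso_of_bij ds_sumD (xdsum_zmod Gamma_zmod)
          (xdsum_zmod (lideal_gen_zmod _ _)).1) => [p||F HF].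
- exact: word_span_xdsum Gamma_zmod (word_span_sorted p).
- exact: ds_sum_inj.
exact: lideal_ds_sum.
Qed.
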